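(* Let $d$ be odd and $a,b,c\ge1$ integers with $2a+2b+2c=d+1$. Let $P(x)=\sum_{j=0}^d a_jx^j$ be a real polynomial whose coefficients are all non-zero with signs given by $D(a,b,c)$; explicitly, $a_j>0$ for odd $j\geq 2b+2c+1$, $a_j<0$ for odd $j\leq 2b+2c-1$, $a_j>0$ for even $j\geq 2c$, and $a_j<0$ for even $j\leq 2c-2$. Let $P_o(x)=\sum_{\nu}a_{2\nu+1}x^{2\nu+1}$ and $P_e(x)=\sum_\nu a_{2\nu}x^{2\nu}$ be the odd and even parts of $P$, and suppose $P_o(1)=1$ and $P_e(1)=-1$ (so $P(1)=0$). Then $P^{(m)}(1)>0$ for every $m=1,2,\ldots,d$.
   Context: $D(a,b,c)$ denotes the sign pattern of length $d+1$ (listed from the coefficient of $x^d$ down to the constant term) consisting of $2a$ pluses, followed by $b$ pairs ''$-,+$'', followed by $2c$ minuses. $P^{(m)}$ denotes the $m$-th derivative of $P$. *)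

From mathcomp Require Import all_boot all_order all_algebra.
Set Implicit Arguments. Unset Strict Implicit. Unset Printing Implicit Defensive.
Import Order.TTheory GRing.Theory Num.Theory.
Local Open Scope ring_scope.

Definition sign_D (R : realFieldType) (a b c : nat) (p : {poly R}) : Prop :=
  forall j : nat, (j <= 2*a + 2*b + 2*c - 1)%N ->
    if odd j then (if (2*b + 2*c + 1 <= j)%N then 0 < p`_j else p`_j < 0)
    else (if (2*c <= j)%N then 0 < p`_j else p`_j < 0).

Definition odd_part_at1 (R : realFieldType) (p : {poly R}) : R :=
  \sum_(j < size p | odd j) p`_j.
Definition even_part_at1 (R : realFieldType) (p : {poly R}) : R :=
  \sum_(j < size p | ~~ odd j) p`_j.

From mathcomp Require Import all_boot all_order all_algebra.
From mathcomp Require Import zify lra.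
Set Implicit Arguments. Unset Strict Implicit. Unset Printing Implicit Defensive.
Import Order.TTheory GRing.Theory Num.Theory.
Local Open Scope ring_scope.

(* Write  P^(m)(1) = m! * T_m  with the "Taylor coefficient at 1"
   T_m = \sum_j a_j C(j, m).  It suffices to show T_m > 0.
   - If m <= 2b+2c+1, compare each parity class with a single binomial weight:
     an odd coefficient is positive exactly when j >= 2b+2c+1, so
     \sum_{j odd} a_j C(j,m) >= P_o(1) C(2b+2c+1,m) = C(2b+2c+1,m); an even
     coefficient is negative exactly when j <= 2c-2, so
     \sum_{j even} a_j C(j,m) >= P_e(1) C(2c-2,m) = -C(2c-2,m).  The binomial
     coefficient being strictly increasing in its upper index gives T_m > 0.
   - If m > 2b+2c+1, every term with j >= m has a positive coefficient and the
     terms with j < m vanish, while the top term a_d C(d,m) is positive. *)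

(* The m-th Taylor coefficient of p at 1, i.e. the coefficient of x^m in p(1+x). *)
Definition taylor1 (R : nzRingType) (p : {poly R}) (m : nat) : R :=
  \sum_(j < size p) p`_j * 'C(j, m)%:R.

Lemma derivn_horner1 (R : comNzRingType) (p : {poly R}) (m : nat) :
  (p^`(m)).[1] = taylor1 p m * m`!%:R.
Proof.
rewrite -{1}[p]coefK poly_def linear_sum horner_sum /taylor1 big_distrl.
apply: eq_bigr => j _.
rewrite linearZ /= derivnXn hornerZ hornerMn hornerXn expr1n -bin_ffact.
by rewrite -mulrA -natrM mulr_natr.
Qed.

Lemma weighted_sum_ge (R : realDomainType) (I : finType) (P : pred I)
    (x w : I -> R) (k : R) :
  (forall i, P i -> (0 < x i /\ k <= w i) \/ (x i < 0 /\ w i <= k)) ->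
  (\sum_(i | P i) x i) * k <= \sum_(i | P i) x i * w i.
Proof.
move=> Hsign; rewrite big_distrl /=; apply: ler_sum => i Pi.
by case: (Hsign i Pi) => [[xi_gt0 le_kw] | [xi_lt0 le_wk]];
  [rewrite ler_pM2l | rewrite ler_nM2l].
Qed.

Lemma ltn_bin2l (n1 n2 m : nat) :
  (n1 < n2)%N -> (0 < m <= n2)%N -> ('C(n1, m) < 'C(n2, m))%N.
Proof.
case: n2 => // n; case: m => // m lt_n1n /andP[_ le_mn].
have le_bin : ('C(n1, m.+1) <= 'C(n, m.+1))%N by apply: leq_bin2l.
have bin_pos : (0 < 'C(n, m))%N by rewrite bin_gt0.
rewrite binS; lia.
Qed.

Section SignPatternD.

Variables (R : realFieldType) (a b c : nat) (p : {poly R}).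
Hypothesis size_p : size p = (2*a + 2*b + 2*c)%N.
Hypothesis sign_p : sign_D a b c p.

(* K_odd is the first positive odd index, K_even the last negative even index. *)
Let K_odd := (2*b + 2*c + 1)%N.
Let K_even := (2*c - 2)%N.

Lemma coef_sign (j : nat) : (j < size p)%N ->
  if odd j then (if (K_odd <= j)%N then 0 < p`_j else p`_j < 0)
  else (if (2*c <= j)%N then 0 < p`_j else p`_j < 0).
Proof. by rewrite size_p => lt_j; apply: sign_p; lia. Qed.

(* Odd part: positive coefficients sit at j >= K_odd, negative ones below. *)
Lemma odd_taylor_ge (m : nat) :
  odd_part_at1 p = 1 ->
  'C(K_odd, m)%:R <= \sum_(j < size p | odd j) p`_j * 'C(j, m)%:R.
Proof.
move=> Po1; rewrite -[X in X <= _]mul1r -{1}Po1.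
apply: weighted_sum_ge => -[j /= lt_j] odd_j.
have := coef_sign lt_j; rewrite odd_j.
case: leqP => [le_Kj | lt_jK] sign_j; [left | right];
  by split=> //; rewrite ler_nat leq_bin2l // ltnW.
Qed.

(* Even part: negative coefficients sit at j <= K_even, positive ones above. *)
Lemma even_taylor_ge (m : nat) :
  even_part_at1 p = -1 ->
  - 'C(K_even, m)%:R <= \sum_(j < size p | ~~ odd j) p`_j * 'C(j, m)%:R.
Proof.
move=> Pe1; rewrite -mulN1r -{1}Pe1.
apply: weighted_sum_ge => -[j /= lt_j] even_j.
have := coef_sign lt_j; rewrite (negbTE even_j).
have j_half := odd_double_half j; rewrite (negbTE even_j) /= -muln2 add0n in j_half.
case: leqP => [le_cj | lt_jc] sign_j; [left | right];
  by split=> //; rewrite ler_nat leq_bin2l // /K_even; lia.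
Qed.

(* Small orders: the two parity classes are controlled by the binomial
   weights at K_odd and K_even, and K_even < K_odd. *)
Lemma taylor1_gt0_low (m : nat) :
  odd_part_at1 p = 1 -> even_part_at1 p = -1 ->
  (0 < m <= K_odd)%N -> 0 < taylor1 p m.
Proof.
move=> Po1 Pe1 m_range; rewrite /taylor1 (bigID (fun j : 'I__ => odd j)) /=.
have Ho := odd_taylor_ge m Po1; have He := even_taylor_ge m Pe1.
have : 'C(K_even, m)%:R < 'C(K_odd, m)%:R :> R.
  by rewrite ltr_nat ltn_bin2l // /K_even /K_odd; lia.
lra.
Qed.

(* Large orders: only indices j >= m > K_odd contribute, all with positive
   coefficients, and the leading term is one of them. *)
Lemma taylor1_gt0_high (m : nat) :
  (0 < a)%N -> (K_odd < m < size p)%N -> 0 < taylor1 p m.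
Proof.
move=> a_gt0 /andP[lt_Km]; rewrite size_p => lt_m_size.
have top_lt : ((2*a + 2*b + 2*c).-1 < size p)%N by rewrite size_p; lia.
rewrite /taylor1 (bigD1 (Ordinal top_lt)) //=.
apply: ltr_pwDl.
  apply: mulr_gt0; last by rewrite ltr0n bin_gt0; lia.
  have := coef_sign top_lt; rewrite /K_odd.
  have -> : odd (2*a + 2*b + 2*c).-1 by rewrite -subn1; lia.
  by case: ifP => //; lia.
apply: sumr_ge0 => j _; case: (ltnP j m) => le_mj.
  by rewrite bin_small // mulr0.
apply: mulr_ge0 => //; apply: ltW; have := coef_sign (ltn_ord j).
by case: ifP => _; case: ifP => //; rewrite /K_odd; lia.
Qed.

End SignPatternD.

Theorem lemma7 (R : realFieldType) (d a b c : nat) (p : {poly R}) :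
  odd d -> (1 <= a)%N -> (1 <= b)%N -> (1 <= c)%N ->
  (2*a + 2*b + 2*c = d + 1)%N ->
  size p = d.+1 ->
  sign_D a b c p ->
  odd_part_at1 p = 1 -> even_part_at1 p = -1 ->
  forall m : nat, (1 <= m <= d)%N -> 0 < (p^`(m)).[1].
Proof.
move=> _ a_gt0 _ _ hd hsize sign_p Po1 Pe1 m /andP[m_gt0 le_md].
have size_p : size p = (2*a + 2*b + 2*c)%N by rewrite hsize hd addn1.
rewrite derivn_horner1; apply: mulr_gt0; last by rewrite ltr0n fact_gt0.
case: (leqP m (2*b + 2*c + 1)) => hm.
- by apply: (taylor1_gt0_low size_p sign_p); rewrite ?m_gt0.
- by apply: (taylor1_gt0_high size_p sign_p); rewrite // hm hsize ltnS.
Qed.
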